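(* Let $1<p<q<\infty$. There exist functions $\phi,\psi\in L^p_{loc}(\mathbb{R})$ such that $S_p(\phi,\psi)<\infty$ and $T_p(\phi,\psi)<\infty$, but $S_q(\phi,\psi)=\infty$.
   Context: For $0<r<\infty$, with $\langle g\rangle_I=\frac1{|I|}\int_Ig$ and suprema over all intervals $I\subset\mathbb{R}$: $S_r(b_1,b_2)=\sup_I\big(\frac1{|I|}\int_I|b_1-\langle b_1\rangle_I|^r\big)^{1/r}\big(\frac1{|I|}\int_I|b_2-\langle b_2\rangle_I|^r\big)^{1/r}$ and $T_r(b_1,b_2)=\sup_I\big(\frac1{|I|}\int_I|b_1-\langle b_1\rangle_I|^r|b_2-\langle b_2\rangle_I|^r\big)^{1/r}$. *)

From HB Require Import structures.
From mathcomp Require Import all_boot all_order all_algebra.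
From mathcomp Require Import all_classical all_reals all_analysis.
Set Implicit Arguments. Unset Strict Implicit. Unset Printing Implicit Defensive.
Import Order.TTheory GRing.Theory Num.Theory.
Local Open Scope classical_set_scope.
Local Open Scope ring_scope.

(* Intervals I are the bounded closed intervals [a,b] with a < b (the choice of
   open/closed endpoints is irrelevant for Lebesgue integrals). *)

Definition avg {R : realType} (f : R -> R) (a b : R) : R :=
  (b - a)^-1 * Rintegral (@lebesgue_measure R) `[a, b] f.

Definition osc {R : realType} (r : R) (f : R -> R) (a b : R) : \bar R :=
  ((b - a)^-1)%:E *
  (\int[@lebesgue_measure R]_(x in `[a, b]) ((`|f x - avg f a b| `^ r)%:E))%E.

Definition Smean {R : realType} (r : R) (f g : R -> R) : \bar R :=
  ereal_sup [set y : \bar R | exists a b : R, a < b /\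
     y = (poweR (osc r f a b) r^-1 * poweR (osc r g a b) r^-1)%E].

Definition Tmean {R : realType} (r : R) (f g : R -> R) : \bar R :=
  ereal_sup [set y : \bar R | exists a b : R, a < b /\
     y = poweR (((b - a)^-1)%:E *
       (\int[@lebesgue_measure R]_(x in `[a, b])
          ((`|f x - avg f a b| `^ r * `|g x - avg g a b| `^ r)%:E)))%E r^-1].

Definition Lploc {R : realType} (r : R) (f : R -> R) : Prop :=
  measurable_fun setT f /\
  forall a b : R, a < b ->
    (\int[@lebesgue_measure R]_(x in `[a, b]) ((`|f x| `^ r)%:E) < +oo)%E.

From HB Require Import structures.
From mathcomp Require Import all_boot all_order all_algebra.
From mathcomp Require Import all_classical all_reals all_analysis.
From mathcomp Require Import measurable_realfun ring lra.
Import Order.TTheory GRing.Theory Num.Theory.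
Local Open Scope ring_scope.
Local Open Scope classical_set_scope.

(* Take phi x = max(-x, 0)^(1/p) and the tent psi x = max(0, 1 - |x - 1|).
   On I = [a, b], phi takes its values in [0, max(-a, 0)^(1/p)], so both the
   S_p and the T_p expression of I are at most (max(-a, 0) * osc p psi a b)^(1/p).
   As p >= 1 and 0 <= psi <= 1, osc p psi a b <= 2 <psi>_I; this vanishes if
   b <= 0, and otherwise <psi>_I <= 2 / |I| while max(-a, 0) <= |I|.  Hence
   S_p and T_p are at most 4^(1/p).
   On I_h = [-2 h^p, 1], phi >= h on an interval of length h^p and phi <= h/2
   on one of length (h/2)^p, so osc q phi is of order h^q h^p / |I_h|, while
   psi >= 1/2 on [1/2, 1] and <psi>_(I_h) <= 1/4 give osc q psi >~ 1 / |I_h|.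
   As |I_h| ~ h^p, the product is of order h^(q-p), unbounded since q > p. *)

Section real_facts.
Context {R : realType}.

Lemma powR_le_self {x r : R} : 1 <= r -> 0 <= x <= 1 -> x `^ r <= x.
Proof.
move=> r1; case/andP; rewrite le_eqVlt => /predU1P[<- _|x0 x1]; last first.
  by apply: ge1r_powR; rewrite ?x0.
by rewrite powR0 // gt_eqF // (lt_le_trans ltr01).
Qed.

Lemma powR_unbounded (e h0 M : R) : 0 < e -> exists2 h, h0 <= h & M <= h `^ e.
Proof.
move=> e0; set m := Num.max M 0.
have m0 : 0 <= m by rewrite le_max lexx orbT.
exists (Num.max h0 (m `^ e^-1)); first by rewrite le_max lexx.
apply: (@le_trans _ _ m); first by rewrite le_max lexx.
rewrite -{1}[m](_ : (m `^ e^-1) `^ e = m); last first.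
  by rewrite -powRrM mulVf ?gt_eqF // powRr1.
apply: ge0_ler_powR; rewrite ?nnegrE ?le_max ?powR_ge0 ?lexx ?orbT //.
exact: ltW.
Qed.

Lemma le_poweR (x y : \bar R) s : 0 <= s -> (0 <= x)%E -> (x <= y)%E ->
  (x `^ s <= y `^ s)%E.
Proof.
move=> s0 x0 xy; apply: gt0_ler_poweR => //.
  by rewrite in_itv /= x0 leey.
by rewrite in_itv /= (le_trans x0 xy) leey.
Qed.

Lemma ereal_sup_eqy (S : set (\bar R)) :
  (forall M : R, 0 <= M -> exists2 y, S y & (M%:E <= y)%E) -> ereal_sup S = +oo%E.
Proof.
move=> SM; case Es: (ereal_sup S) => [s| |] //.
- have [y Sy My] := SM (`|s| + 1) (addr_ge0 (normr_ge0 _) ler01).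
  have := le_trans My (ereal_sup_ubound Sy).
  by rewrite Es lee_fin leNgt (le_lt_trans (ler_norm s)) ?ltrDl.
- have [y Sy y0] := SM 0 (lexx 0).
  by have := le_trans y0 (ereal_sup_ubound Sy); rewrite Es.
Qed.

End real_facts.

Section mean_oscillation.
Context {R : realType}.
Local Notation mu := (@lebesgue_measure R).
Implicit Types (f g : R -> R) (a b c r u v : R).

Lemma lebesgue_measure_itv_cc {a b} : a <= b -> mu `[a, b] = (b - a)%:E.
Proof.
move=> ab; rewrite lebesgue_measure_itv /= lte_fin.
by case: ltgtP ab => // -> _; rewrite subrr.
Qed.

Lemma subset_itv_cc a b u v : a <= u -> v <= b -> `[u, v] `<=` (`[a, b] : set R).
Proof.
move=> au vb x /=; rewrite !in_itv /= => /andP[ux xv].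
by rewrite (le_trans au ux) (le_trans xv vb).
Qed.

Lemma measurable_powR_norm f r (D : set R) : measurable_fun setT f ->
  measurable_fun D (fun x => `|f x| `^ r).
Proof.
move=> mf.
apply: (@measurableT_comp _ _ _ _ _ _ (@powR R ^~ r) _ (fun x => `|f x|)).
  exact: measurable_powR.
apply: (@measurableT_comp _ _ _ _ _ _ (@Num.Def.normr _ R) _ f).
  exact: normr_measurable.
exact: measurable_funS mf.
Qed.

Lemma measurable_powR_normB f c r (D : set R) : measurable_fun setT f ->
  measurable_fun D (fun x => `|f x - c| `^ r).
Proof.
move=> mf; apply: (@measurable_powR_norm (fun x => f x - c)).
apply: measurable_funB => //; exact: measurable_cst.
Qed.

Lemma integral_itv_le_cst {g a b M} : a <= b -> measurable_fun `[a, b] g ->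
  (forall x, `[a, b] x -> 0 <= g x <= M) ->
  (\int[mu]_(x in `[a, b]) (g x)%:E <= (M * (b - a))%:E)%E.
Proof.
move=> ab mg gM; rewrite EFinM -lebesgue_measure_itv_cc // -integral_cst //.
apply: ge0_le_integral => //.
- by move=> x /gM /andP[g0 _]; rewrite lee_fin.
- exact/measurable_EFinP.
- by move=> x /gM /andP[_ gM']; rewrite lee_fin.
Qed.

Lemma integral_itv_ge_cst g a b u v m : a <= u -> u <= v -> v <= b -> 0 <= m ->
  measurable_fun `[a, b] g -> (forall x, `[a, b] x -> 0 <= g x) ->
  (forall x, `[u, v] x -> m <= g x) ->
  ((m * (v - u))%:E <= \int[mu]_(x in `[a, b]) (g x)%:E)%E.
Proof.
move=> au uv vb m0 mg g0 gm.
apply: (@le_trans _ _ (\int[mu]_(x in `[u, v]) (g x)%:E)%E); last first.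
  apply: ge0_subset_integral => //; last exact: subset_itv_cc.
  exact/measurable_EFinP.
rewrite EFinM -lebesgue_measure_itv_cc // -integral_cst //.
apply: ge0_le_integral => //.
by apply/measurable_EFinP; apply: measurable_funS mg; [|exact: subset_itv_cc].
Qed.

Lemma integral_itv_avg f a b : a < b ->
  (\int[mu]_(x in `[a, b]) (f x)%:E)%E \is a fin_num ->
  (\int[mu]_(x in `[a, b]) (f x)%:E = ((b - a) * avg f a b)%:E)%E.
Proof.
move=> ab Ifin; rewrite /avg /Rintegral mulrA mulfV ?mul1r ?fineK //.
by rewrite subr_eq0 gt_eqF.
Qed.

Lemma avg_ge0 f a b : a < b -> (forall x, `[a, b] x -> 0 <= f x) -> 0 <= avg f a b.
Proof.
move=> ab f0; rewrite mulr_ge0 ?invr_ge0 ?subr_ge0 ?fine_ge0 //; first exact: ltW.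
by apply: integral_ge0 => x /f0; rewrite lee_fin.
Qed.

Lemma len_mul_avg_le {f a b M} : a < b -> measurable_fun setT f ->
  (forall x, `[a, b] x -> 0 <= f x) ->
  (\int[mu]_(x in `[a, b]) (f x)%:E <= M%:E)%E -> (b - a) * avg f a b <= M.
Proof.
move=> ab mf f0 IM.
have I0 : (0 <= \int[mu]_(x in `[a, b]) (f x)%:E)%E.
  by apply: integral_ge0 => x /f0; rewrite lee_fin.
have Ifin : (\int[mu]_(x in `[a, b]) (f x)%:E)%E \is a fin_num.
  by rewrite ge0_fin_numE // (le_lt_trans IM) ?ltry.
by move: IM; rewrite integral_itv_avg // lee_fin.
Qed.

Lemma avg_ge0_le {f a b M} : a < b -> measurable_fun setT f ->
  (forall x, `[a, b] x -> 0 <= f x <= M) -> 0 <= avg f a b <= M.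
Proof.
move=> ab mf fM; have ba : 0 < b - a by rewrite subr_gt0.
have f0 x : `[a, b] x -> 0 <= f x by move/fM/andP=> [].
have mfab : measurable_fun `[a, b] f by exact: measurable_funS mf.
rewrite avg_ge0 //= -(ler_pM2l ba) [X in _ <= X]mulrC.
exact: len_mul_avg_le ab mf f0 (integral_itv_le_cst (ltW ab) mfab fM).
Qed.

Lemma normB_avg_le f a b K x : a < b ->
  measurable_fun setT f -> (forall y, `[a, b] y -> 0 <= f y <= K) ->
  `[a, b] x -> `|f x - avg f a b| <= K.
Proof.
move=> ab mf fK /fK /andP[fx0 fxK]; have /andP[c0 cK] := avg_ge0_le ab mf fK.
by rewrite ler_norml; apply/andP; split; lra.
Qed.

Lemma osc_ge0 r f a b : a < b -> (0 <= osc r f a b)%E.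
Proof.
move=> ab; apply: mule_ge0; first by rewrite lee_fin invr_ge0 subr_ge0 ltW.
by apply: integral_ge0 => x _; rewrite lee_fin powR_ge0.
Qed.

Lemma osc_le {r f a b K} : a < b -> measurable_fun setT f ->
  (forall x, `[a, b] x -> `|f x - avg f a b| `^ r <= K) -> (osc r f a b <= K%:E)%E.
Proof.
move=> ab mf fK; rewrite lee_pdivrMl ?subr_gt0 // -EFinM mulrC.
apply: integral_itv_le_cst; [exact: ltW|exact: measurable_powR_normB|].
by move=> x xab; rewrite powR_ge0 fK.
Qed.

Lemma osc_le_twice_avg r f a b : 1 <= r -> a < b -> measurable_fun setT f ->
  (forall x, `[a, b] x -> 0 <= f x <= 1) -> (osc r f a b <= (2 * avg f a b)%:E)%E.
Proof.
move=> r1 ab mf f01; have ba : 0 < b - a by rewrite subr_gt0.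
have mfab : measurable_fun `[a, b] f by exact: measurable_funS mf.
set c := avg f a b.
have /andP[c0 c1] : 0 <= c <= 1 := avg_ge0_le ab mf f01.
(* Here |f - c| <= 1 <= r, and f + c has mean 2 c. *)
have dev x : `[a, b] x -> `|f x - c| `^ r <= f x + c.
  move=> /f01 /andP[fx0 fx1].
  apply: (@le_trans _ _ `|f x - c|).
    by apply: (powR_le_self r1); rewrite normr_ge0 /= ler_norml; apply/andP; split; lra.
  by rewrite ler_norml; apply/andP; split; lra.
have Ifin : (\int[mu]_(x in `[a, b]) (f x)%:E)%E \is a fin_num.
  rewrite ge0_fin_numE; last by apply: integral_ge0 => x /f01/andP[? _]; rewrite lee_fin.
  by rewrite (le_lt_trans (integral_itv_le_cst (ltW ab) mfab f01)) ?ltry.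
rewrite lee_pdivrMl // (@le_trans _ _ (\int[mu]_(x in `[a, b]) (f x + c)%:E)%E) //.
  apply: ge0_le_integral => //; apply/measurable_EFinP.
    exact: measurable_powR_normB.
  by apply: measurable_funD => //; exact: measurable_cst.
under eq_integral do rewrite EFinD.
rewrite ge0_integralD //; first last.
- exact/measurable_EFinP.
- by move=> x /f01/andP[fx0 _]; rewrite lee_fin.
rewrite integral_cst //= integral_itv_avg //.
have -> : lebesgue_measure `[a, b] = (b - a)%:E := lebesgue_measure_itv_cc (ltW ab).
by rewrite -!EFinM -EFinD lee_fin -/c; nra.
Qed.

Lemma osc_ge r f a b u v m : 0 <= r -> a < b -> a <= u -> u <= v -> v <= b ->
  0 <= m -> measurable_fun setT f ->
  (forall x, `[u, v] x -> m <= `|f x - avg f a b|) ->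
  ((m `^ r * (v - u) / (b - a))%:E <= osc r f a b)%E.
Proof.
move=> r0 ab au uv vb m0 mf fm.
rewrite mulrC EFinM; apply: lee_wpmul2l; first by rewrite lee_fin invr_ge0 subr_ge0 ltW.
apply: integral_itv_ge_cst => //; first by rewrite powR_ge0.
  exact: measurable_powR_normB.
by move=> x /fm; apply: ge0_ler_powR.
Qed.

Lemma osc_ge_two_levels r f a b u1 u2 l lo hi : 0 <= r -> a < b ->
  measurable_fun setT f -> a <= u1 -> u1 + l <= b -> a <= u2 -> u2 + l <= b ->
  0 <= l -> lo <= hi ->
  (forall x, `[u1, u1 + l] x -> hi <= f x) ->
  (forall x, `[u2, u2 + l] x -> f x <= lo) ->
  ((((hi - lo) / 2) `^ r * l / (b - a))%:E <= osc r f a b)%E.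
Proof.
move=> r0 ab mf au1 u1b au2 u2b l0 lohi fhi flo.
have m0 : 0 <= (hi - lo) / 2 by rewrite divr_ge0 // subr_ge0.
have len u : u + l - u = l by rewrite addrC addKr.
(* The mean lies on one side of (hi + lo) / 2, and f stays (hi - lo) / 2 away
   from it on the interval where f lies on the other side. *)
have [c_le|c_gt] := leP (avg f a b) ((hi + lo) / 2).
- rewrite -(len u1); apply: osc_ge => //; first by rewrite lerDl.
  move=> x /fhi fx; rewrite (le_trans _ (ler_norm _)) //; lra.
- rewrite -(len u2); apply: osc_ge => //; first by rewrite lerDl.
  move=> x /flo fx; rewrite ler_normr; apply/orP; right; lra.
Qed.

Lemma mean_prod_powR_le {r f g a b K} : a < b ->
  measurable_fun setT f -> measurable_fun setT g ->
  (forall x, `[a, b] x -> `|f x - avg f a b| `^ r <= K) ->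
  (((b - a)^-1)%:E * \int[mu]_(x in `[a, b])
     ((`|f x - avg f a b| `^ r * `|g x - avg g a b| `^ r)%:E)
   <= K%:E * osc r g a b)%E.
Proof.
move=> ab mf mg fK.
have K0 : 0 <= K.
  by apply: le_trans _ (fK a _); rewrite ?powR_ge0 //= in_itv /= lexx ltW.
rewrite /osc muleCA; apply: lee_wpmul2l; first by rewrite lee_fin invr_ge0 subr_ge0 ltW.
rewrite -ge0_integralZl_EFin //; last first.
  by apply/measurable_EFinP; exact: measurable_powR_normB.
apply: ge0_le_integral => //.
- by apply/measurable_EFinP; apply: measurable_funM; exact: measurable_powR_normB.
- apply: emeasurable_funM; first exact: measurable_cst.
  by apply/measurable_EFinP; exact: measurable_powR_normB.
- by move=> x /fK xK; rewrite -EFinM lee_fin ler_wpM2r ?powR_ge0.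
Qed.

End mean_oscillation.

Section phi_psi.
Context {R : realType}.
Local Notation mu := (@lebesgue_measure R).
Implicit Types (a b h x : R).

Definition negpart x : R := Num.max (- x) 0.

Lemma negpart_ge0 x : 0 <= negpart x.
Proof. by rewrite le_max lexx orbT. Qed.

Lemma le_negpart x y : x <= y -> negpart y <= negpart x.
Proof. by move=> xy; rewrite /negpart ge_max !le_max lerN2 xy lexx orbT. Qed.

Section phi.
Variables (p : R) (p_gt0 : 0 < p).

Definition phi x : R := negpart x `^ p^-1.

Lemma measurable_phi : measurable_fun setT phi.
Proof.
apply: (@measurableT_comp _ _ _ _ _ _ (@powR R ^~ p^-1) _ negpart).
  exact: measurable_powR.
by apply: measurable_maxr; [exact: measurable_funN|exact: measurable_cst].
Qed.

Lemma phi_ge0 x : 0 <= phi x.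
Proof. exact: powR_ge0. Qed.

Lemma phiK x : phi x `^ p = negpart x.
Proof. by rewrite -powRrM mulVf ?gt_eqF // powRr1 // negpart_ge0. Qed.

Lemma phi_opp_powR h : 0 <= h -> phi (- h `^ p) = h.
Proof.
move=> h0; rewrite /phi /negpart opprK max_l ?powR_ge0 //.
by rewrite -powRrM mulfV ?gt_eqF // powRr1.
Qed.

Lemma le_phi x y : x <= y -> phi y <= phi x.
Proof.
move=> xy; apply: ge0_ler_powR; rewrite ?nnegrE ?negpart_ge0 ?le_negpart //.
by rewrite invr_ge0 ltW.
Qed.

End phi.

Definition psi x : R := Num.max 0 (1 - `|x - 1|).

Lemma measurable_psi : measurable_fun setT psi.
Proof.
apply: measurable_maxr; first exact: measurable_cst.
apply: measurable_funB; first exact: measurable_cst.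
apply: (@measurableT_comp _ _ _ _ _ _ (@Num.Def.normr _ R) _ (fun x => x - 1)).
  exact: normr_measurable.
by apply: measurable_funB; [exact: measurable_id|exact: measurable_cst].
Qed.

Lemma psi_ge0 x : 0 <= psi x.
Proof. by rewrite /psi le_max lexx. Qed.

Lemma psi_le_indic x : psi x <= \1_(`[0, 2] : set R) x.
Proof.
rewrite /psi indicE ge_max; case: (boolP (x \in _)) => [_|].
  by rewrite ler01 gerDl oppr_le0 normr_ge0.
rewrite lexx /= => /negP; rewrite in_setE /= in_itv /= => /negP.
rewrite negb_and -!ltNge subr_le0 => /orP[x0|x2].
  by rewrite ler0_norm; lra.
by rewrite ger0_norm; lra.
Qed.

Lemma psi_le1 x : psi x <= 1.
Proof. by rewrite (le_trans (psi_le_indic x)) // indicE; case: (_ \in _). Qed.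

Lemma psi_nonpos x : x <= 0 -> psi x = 0.
Proof. by move=> x0; apply/max_idPl; rewrite ler0_norm; lra. Qed.

Lemma psi_ge_half x : 2^-1 <= x <= 1 -> 2^-1 <= psi x.
Proof. by case/andP=> ? ?; rewrite /psi le_max ler0_norm; lra. Qed.

Lemma integral_psi_le a b : (\int[mu]_(x in `[a, b]) (psi x)%:E <= 2%:E)%E.
Proof.
apply: (@le_trans _ _ (\int[mu]_(x in `[a, b]) (\1_(`[0, 2] : set R) x)%:E)%E).
  apply: ge0_le_integral => //.
  - by move=> x _; rewrite lee_fin psi_ge0.
  - by apply/measurable_EFinP; exact: measurable_funS measurable_psi.
  - by apply/measurable_EFinP; exact: measurable_indic.
  - by move=> x _; rewrite lee_fin psi_le_indic.
have mu02 : mu `[0, 2] = 2%:E by rewrite lebesgue_measure_itv_cc ?subr0.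
by rewrite integral_indic // -mu02; exact: measureIl.
Qed.

Lemma avg_psi_ge0 {a b} : a < b -> 0 <= avg psi a b.
Proof. by move=> ab; apply: avg_ge0 => // x _; exact: psi_ge0. Qed.

Lemma len_mul_avg_psi_le {a b} : a < b -> (b - a) * avg psi a b <= 2.
Proof.
move=> ab; apply: len_mul_avg_le ab measurable_psi (fun x _ => psi_ge0 x) _.
exact: integral_psi_le.
Qed.

(* The negative part of [a] is at most [b - a] unless [b <= 0], and then psi
   vanishes on [a, b]. *)
Lemma negpart_avg_psi_le {a b} : a < b -> negpart a * avg psi a b <= 2.
Proof.
move=> ab; have [b0|b0] := leP b 0.
  have psi0 x : `[a, b] x -> 0 <= psi x <= 0.
    by rewrite /= in_itv /= => /andP[_ xb]; rewrite psi_nonpos ?lexx //; lra.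
  have /andP[_ avg_le0] := avg_ge0_le ab measurable_psi psi0.
  by rewrite (le_trans (mulr_ge0_le0 (negpart_ge0 a) avg_le0)).
apply: le_trans _ (len_mul_avg_psi_le ab); apply: ler_wpM2r; first exact: avg_psi_ge0.
by rewrite /negpart ge_max; apply/andP; split; lra.
Qed.

Lemma negpart_osc_psi_le {p a b} : 1 <= p -> a < b ->
  ((negpart a)%:E * osc p psi a b <= 4%:E)%E.
Proof.
move=> p1 ab; have psi01 x : `[a, b] x -> 0 <= psi x <= 1 by rewrite psi_ge0 psi_le1.
apply: (@le_trans _ _ ((negpart a)%:E * (2 * avg psi a b)%:E)%E).
  apply: lee_wpmul2l; first by rewrite lee_fin negpart_ge0.
  exact: osc_le_twice_avg p1 ab measurable_psi psi01.
by rewrite -EFinM lee_fin mulrCA; have := negpart_avg_psi_le ab; lra.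
Qed.

End phi_psi.

Section upper_bounds.
Context {R : realType} (p : R) (p_gt1 : 1 < p).
Local Notation mu := (@lebesgue_measure R).
Let p_gt0 : 0 < p := lt_trans ltr01 p_gt1.

Lemma phi_dev_le {a b x} : a < b -> `[a, b] x ->
  `|phi p x - avg (phi p) a b| `^ p <= negpart a.
Proof.
move=> ab xab; rewrite -(phiK _ p_gt0 a).
apply: ge0_ler_powR; rewrite ?nnegrE ?normr_ge0 ?phi_ge0 //; first exact: ltW.
apply: normB_avg_le ab (measurable_phi _) _ xab => y /=; rewrite in_itv /=.
by case/andP=> ay _; rewrite phi_ge0 le_phi.
Qed.

Lemma osc_phi_mul_osc_psi_le a b : a < b ->
  (osc p (phi p) a b * osc p psi a b <= 4%:E)%E.
Proof.
move=> ab; apply: le_trans _ (negpart_osc_psi_le (ltW p_gt1) ab).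
apply: lee_wpmul2r; first exact: osc_ge0.
exact: osc_le ab (measurable_phi _) (fun x => phi_dev_le ab).
Qed.

Lemma mean_prod_phi_psi_le a b : a < b ->
  (((b - a)^-1)%:E * \int[mu]_(x in `[a, b])
     ((`|phi p x - avg (phi p) a b| `^ p * `|psi x - avg psi a b| `^ p)%:E)
   <= 4%:E)%E.
Proof.
move=> ab; apply: le_trans _ (negpart_osc_psi_le (ltW p_gt1) ab).
exact: mean_prod_powR_le ab (measurable_phi _) measurable_psi (fun x => phi_dev_le ab).
Qed.

Lemma Smean_phi_psi_lty : (Smean p (phi p) psi < +oo)%E.
Proof.
apply: (@le_lt_trans _ _ (4%:E `^ p^-1)%E); last exact: poweR_lty (ltry _).
apply: ge_ereal_sup => _ [a [b [ab ->]]].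
rewrite -poweRM ?osc_ge0 //; apply: le_poweR.
- by rewrite invr_ge0 ltW.
- by rewrite mule_ge0 ?osc_ge0.
- exact: osc_phi_mul_osc_psi_le.
Qed.

Lemma Tmean_phi_psi_lty : (Tmean p (phi p) psi < +oo)%E.
Proof.
apply: (@le_lt_trans _ _ (4%:E `^ p^-1)%E); last exact: poweR_lty (ltry _).
apply: ge_ereal_sup => _ [a [b [ab ->]]]; apply: le_poweR.
- by rewrite invr_ge0 ltW.
- apply: mule_ge0; first by rewrite lee_fin invr_ge0 subr_ge0 ltW.
  by apply: integral_ge0 => x _; rewrite lee_fin mulr_ge0 ?powR_ge0.
- exact: mean_prod_phi_psi_le.
Qed.

Lemma Lploc_phi : Lploc p (phi p).
Proof.
split=> [|a b ab]; first exact: measurable_phi.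
apply: (@le_lt_trans _ _ (negpart a * (b - a))%:E); last exact: ltry.
apply: integral_itv_le_cst (ltW ab) _ _.
  exact: measurable_powR_norm (measurable_phi _).
move=> x /=; rewrite in_itv /= => /andP[ax _].
by rewrite powR_ge0 ger0_norm ?phi_ge0 // (phiK _ p_gt0) le_negpart.
Qed.

Lemma Lploc_psi : Lploc p psi.
Proof.
split=> [|a b ab]; first exact: measurable_psi.
apply: (@le_lt_trans _ _ (1 * (b - a))%:E); last exact: ltry.
apply: integral_itv_le_cst (ltW ab) _ _.
  exact: measurable_powR_norm measurable_psi.
move=> x _; rewrite powR_ge0 ger0_norm ?psi_ge0 //.
have psi01 : 0 <= psi x <= 1 by rewrite psi_ge0 psi_le1.
exact: le_trans (powR_le_self (ltW p_gt1) psi01) (psi_le1 x).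
Qed.

End upper_bounds.

Section lower_bound.
Context {R : realType} (p q : R) (p_gt1 : 1 < p) (p_lt_q : p < q).
Let p_gt0 : 0 < p := lt_trans ltr01 p_gt1.
Let q_gt0 : 0 < q := lt_trans p_gt0 p_lt_q.

Lemma osc_psi_ge a b : a <= 2^-1 -> 1 <= b -> 8 <= b - a ->
  (((4^-1) `^ q / 2 / (b - a))%:E <= osc q psi a b)%E.
Proof.
move=> a_le b_ge ba8; have ab : a < b by lra.
have c0 := avg_psi_ge0 ab; have c2 := len_mul_avg_psi_le ab.
have c4 : avg psi a b <= 4^-1 by nra.
have -> : (4^-1) `^ q / 2 = (4^-1) `^ q * (1 - 2^-1) by congr (_ * _); field.
apply: osc_ge => //; [exact: ltW|lra|exact: measurable_psi|].
move=> x /=; rewrite in_itv /= => /psi_ge_half psi_x.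
by rewrite (le_trans _ (ler_norm _)) //; lra.
Qed.

Lemma osc_phi_ge h : 0 <= h ->
  (((h / 4) `^ q * (h / 2) `^ p / (1 + 2 * h `^ p))%:E
     <= osc q (phi p) (- (2 * h `^ p)) 1)%E.
Proof.
move=> h0; set t := h `^ p; set l := (h / 2) `^ p.
have t0 : 0 <= t := powR_ge0 _ _.
have l0 : 0 <= l := powR_ge0 _ _.
have lt : l <= t.
  by apply: ge0_ler_powR; rewrite ?nnegrE; try lra; exact: ltW.
have -> : h / 4 = (h - h / 2) / 2 by field.
have -> : 1 + 2 * t = 1 - - (2 * t) by rewrite opprK.
apply: (@osc_ge_two_levels _ _ _ _ _ (- (2 * t)) (- l)) => //; try lra.
- exact: ltW.
- exact: measurable_phi.
- move=> x /=; rewrite in_itv /= => /andP[_ x_le].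
  by rewrite -{1}(phi_opp_powR _ p_gt0 _ h0) le_phi // -/t; lra.
- move=> x /=; rewrite in_itv /= => /andP[x_ge _].
  by rewrite -(phi_opp_powR _ p_gt0 (h / 2)) ?le_phi // -/t; lra.
Qed.

Lemma osc_phi_mul_osc_psi_ge : exists2 C, 0 < C & forall h, 4 <= h ->
  ((C * h `^ (q - p))%:E <=
     osc q (phi p) (- (2 * h `^ p)) 1 * osc q psi (- (2 * h `^ p)) 1)%E.
Proof.
set A := (4^-1 : R) `^ q; set B := (2^-1 : R) `^ p.
have A0 : 0 < A by rewrite powR_gt0.
have B0 : 0 < B by rewrite powR_gt0.
exists (A * B * A / 18); first by rewrite !mulr_gt0.
move=> h h4; set t := h `^ p; set L := 1 + 2 * t.
have h0 : 0 < h by lra.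
have ht : h <= t by apply: le1r_powR; [lra|exact: ltW].
have L0 : 0 < L by rewrite /L; lra.
have hY : ((A / 2 / L)%:E <= osc q psi (- (2 * t)) 1)%E.
  by have := @osc_psi_ge (- (2 * t)) 1; rewrite opprK; apply; rewrite -/t; lra.
have hX := osc_phi_ge h (ltW h0); rewrite -/t -/L in hX.
apply: le_trans _ (lee_pmul _ _ hX hY).
- rewrite -EFinM lee_fin.
  have hq : h `^ q = h `^ (q - p) * t.
    by rewrite /t -powRD ?subrK // gt_eqF ?implybT.
  have -> : (h / 4) `^ q = h `^ (q - p) * t * A.
    by rewrite powRM ?invr_ge0 ?(ltW h0) // hq.
  rewrite powRM ?invr_ge0 ?(ltW h0) // -/t -/B.
  have -> : h `^ (q - p) * t * A * (t * B) / L * (A / 2 / L)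
      = A * B * A / 2 * h `^ (q - p) * (t * t / (L * L)) by field; lra.
  (* t^2 / L^2 >= 1/9 because L = 1 + 2 t <= 3 t. *)
  rewrite [X in X <= _](_ : _ = A * B * A / 2 * h `^ (q - p) * 9^-1); last by field.
  apply: ler_wpM2l; first by rewrite !mulr_ge0 ?powR_ge0 // ltW.
  by rewrite ler_pdivlMr ?mulr_gt0 // /L; nra.
- by rewrite lee_fin !mulr_ge0 ?invr_ge0 ?powR_ge0 // ltW.
- by rewrite lee_fin !mulr_ge0 ?invr_ge0 ?powR_ge0 // ltW.
Qed.

Lemma Smean_phi_psi_eqy : Smean q (phi p) psi = +oo%E.
Proof.
have [C C0 XY] := osc_phi_mul_osc_psi_ge.
apply: ereal_sup_eqy => M M0.
have [h h4 hM] : exists2 h, 4 <= h & M `^ q / C <= h `^ (q - p).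
  by apply: powR_unbounded; rewrite subr_gt0.
have ab : - (2 * h `^ p) < 1 by have := powR_ge0 h p; lra.
exists (osc q (phi p) (- (2 * h `^ p)) 1 `^ q^-1 * osc q psi (- (2 * h `^ p)) 1 `^ q^-1)%E.
  by exists (- (2 * h `^ p)), 1.
apply: (@le_trans _ _ ((M `^ q)%:E `^ q^-1)%E).
  by rewrite poweR_EFin -powRrM mulfV ?gt_eqF // powRr1.
rewrite -poweRM ?osc_ge0 //; apply: le_poweR.
- by rewrite invr_ge0 ltW.
- by rewrite lee_fin powR_ge0.
- by apply: le_trans _ (XY h h4); rewrite lee_fin mulrC -ler_pdivrMr.
Qed.

End lower_bound.

Theorem proposition4p1 (R : realType) (p q : R) :
  1 < p -> p < q ->
  exists phi psi : R -> R,
    [/\ Lploc p phi, Lploc p psi,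
        (Smean p phi psi < +oo)%E,
        (Tmean p phi psi < +oo)%E &
        Smean q phi psi = +oo%E].
Proof.
move=> p_gt1 p_lt_q; exists (phi p), psi; split.
- exact: Lploc_phi.
- exact: Lploc_psi.
- exact: Smean_phi_psi_lty.
- exact: Tmean_phi_psi_lty.
- exact: Smean_phi_psi_eqy.
Qed.
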